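(* Suppose the density $f$ is unimodal and the noise has a unimodal failure rate; let $r^*_0\in\arg\max\{B_r/r:1\le r\le n-1\}$ and $\hat r=\max\{r:\beta_r>0\}$. Let $M^*(\theta)=\max_{{\bf v}\in\mathcal V}M({\bf v},\theta)=\max_{1\le r\le n-1}A_r(\theta)$ and let $x^{**}(\theta)$ be the equilibrium effort under optimal prizes, i.e. $c'(x^{**}(\theta))=M^*(\theta)$. Then: (i) If $\hat r\le\lfloor n/2\rfloor$, then $M^*(\theta)$, and hence $x^{**}(\theta)$, is nonincreasing in $\theta\in[0,1]$. (ii) If $r^*_0>\lceil n/2\rceil$, then $M^*(\theta)$, and hence $x^{**}(\theta)$, is increasing in $\theta\in[0,1]$. (iii) If $\hat r>\lceil n/2\rceil$, then there exists $\bar\theta<1$ such that $M^*(\theta)$, and hence $x^{**}(\theta)$, is increasing in $\theta$ on $[\bar\theta,1]$.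
   Context: Fix an integer $n\ge 2$ and a noise distribution with cdf $F$ and density $f$ on $\mathbb R$ (integrals finite). For $r=1,\dots,n$ let $g_r(u)=u^{n-r}(1-u)^{r-1}$ and $\beta_r=\binom{n-1}{r-1}\int g_r'(F(t))f(t)^2dt$; $B_r=\sum_{k=1}^r\beta_k$, which for $1\le r\le n-1$ equals $r\binom{n-1}{r}\int F(t)^{n-1-r}[1-F(t)]^{r-1}f(t)^2dt>0$. Let $\mathcal V=\{{\bf v}\in\mathbb R^n: v_1\ge\dots\ge v_n\ge 0,\ \sum_r v_r=1\}$, $R({\bf v})=\sum_r\beta_rv_r$, $L({\bf v})=-\frac1n\sum_{r=1}^n\sum_{s<r}(\beta_r+\beta_s)(v_s-v_r)$, $M({\bf v},\theta)=R({\bf v})+\theta L({\bf v})$ for $\theta\in[0,1]$, and $A_r(\theta)=\big[1+\theta\big(\frac{2r}{n}-1\big)\big]\frac{B_r}{r}$ for $1\le r\le n-1$. The effort cost $c$ is strictly increasing, differentiable and strictly convex on $[0,\bar x]$, $\bar x=c^{-1}(1)$, with $c(0)=c'(0)=0$. The failure rate is $h=f/(1-F)$; a function is unimodal if it is (weakly) first increasing then decreasing (monotone functions included); the noise has a unimodal failure rate if $h$ is unimodal. *)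

From Stdlib Require Import Reals List Lra Lia.
From Coquelicot Require Import Coquelicot.
Open Scope R_scope.

Definition cdf_with_density (F f : R -> R) : Prop :=
  (forall t, 0 <= f t) /\
  (forall t, is_RInt_gen f (Rbar_locally m_infty) (at_point t) (F t)) /\
  is_RInt_gen f (Rbar_locally m_infty) (Rbar_locally p_infty) 1.

Definition g (n r : nat) (u : R) : R := u ^ (n - r) * (1 - u) ^ (r - 1).

Definition beta_integrand (n : nat) (F f : R -> R) (r : nat) (t : R) : R :=
  Derive (g n r) (F t) * (f t) ^ 2.

Definition beta (n : nat) (F f : R -> R) (r : nat) : R :=
  Binomial.C (n - 1) (r - 1) *
  RInt_gen (beta_integrand n F f r) (Rbar_locally m_infty) (Rbar_locally p_infty).

Definition Bsum (n : nat) (F f : R -> R) (r : nat) : R :=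
  fold_right Rplus 0 (map (beta n F f) (seq 1 r)).

Definition A (n : nat) (F f : R -> R) (r : nat) (theta : R) : R :=
  (1 + theta * (2 * INR r / INR n - 1)) * Bsum n F f r / INR r.

(** M*(theta) = max_{1 <= r <= n-1} A_r(theta)  (n >= 2, so the range is nonempty) *)
Definition Mstar (n : nat) (F f : R -> R) (theta : R) : R :=
  fold_right Rmax (A n F f 1 theta) (map (fun r => A n F f r theta) (seq 1 (n - 1))).

(** weakly unimodal on a set P (monotone functions included, via a mode in Rbar) *)
Definition unimodal_on (P : R -> Prop) (h : R -> R) : Prop :=
  exists m : Rbar, forall x y, P x -> P y -> x <= y ->
    (Rbar_le (Finite y) m -> h x <= h y) /\ (Rbar_le m (Finite x) -> h y <= h x).

Definition unimodal (h : R -> R) : Prop := unimodal_on (fun _ => True) h.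

Definition failure_rate (F f : R -> R) (t : R) : R := f t / (1 - F t).

Definition unimodal_failure_rate (F f : R -> R) : Prop :=
  unimodal_on (fun t => F t < 1) (failure_rate F f).

(** dc is the derivative of c relative to the interval [a,b] (one-sided at endpoints) *)
Definition derivative_on (c dc : R -> R) (a b : R) : Prop :=
  forall x, a <= x <= b ->
    filterlim (fun y => (c y - c x) / (y - x))
      (within (fun y => a <= y <= b /\ y <> x) (locally x)) (locally (dc x)).

Definition effort_cost (c dc : R -> R) (xbar : R) : Prop :=
  0 < xbar /\ c xbar = 1 /\ c 0 = 0 /\ dc 0 = 0 /\
  (forall x y, 0 <= x -> x < y -> y <= xbar -> c x < c y) /\
  derivative_on c dc 0 xbar /\
  (forall x y t, 0 <= x <= xbar -> 0 <= y <= xbar -> x <> y -> 0 < t < 1 ->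
     c (t * x + (1 - t) * y) < t * c x + (1 - t) * c y).

Definition equilibrium_effort (n : nat) (F f dc : R -> R) (xbar : R) (xss : R -> R) : Prop :=
  forall theta, 0 <= theta <= 1 ->
    0 <= xss theta <= xbar /\ dc (xss theta) = Mstar n F f theta.

Definition nonincreasing_on01 (h : R -> R) : Prop :=
  forall a b, 0 <= a -> a <= b -> b <= 1 -> h b <= h a.

Definition increasing_on (h : R -> R) (lo hi : R) : Prop :=
  forall a b, lo <= a -> a < b -> b <= hi -> h a < h b.

(* Write beta_r as a positive multiple of I_r = int g_r'(F) f^2.  The key fact is that
   int P'(F) f^2 >= 0 for every smooth weight P with P <= P(F m) on [0, F m] and
   P >= P(F m) on [F m, 1], m a mode of f: the integral is formally the Stieltjes integral
   int f d(P o F), and on each side of the mode f is monotone while P o F stays on one side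
   of P(F m), so Abel summation (a discrete second mean value theorem) makes both halves
   nonnegative.  The nondecreasing weight -g_n gives I_n <= 0, and the weight
   g_j / g_j(F m) - g_(j+1) / g_(j+1)(F m), which changes sign exactly at F m, shows that
   I_j / g_j(F m) is nonincreasing in j.  Together with I_1 > 0, the beta_r change sign
   once, so B_r increases up to rhat and decreases after it.
   Each A_r(theta) is affine in theta with slope of the sign of (2r - n) B_r.  Hence
   M* = max_r A_r is nonincreasing when rhat <= n/2, increasing when the maximiser r0 of
   B_r / r lies above n/2, and increasing near theta = 1 when rhat > n/2, because then
   A_rhat(1) > A_r(1) for r < rhat.  Finally x** inherits the monotonicity of M* since c'
   is strictly increasing. *)

From Stdlib Require Import Reals Lra Lia List Classical.
From Coquelicot Require Import Coquelicot.
Open Scope R_scope.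

Notation at_minf := (Rbar_locally m_infty).
Notation at_pinf := (Rbar_locally p_infty).

Lemma Rabs_bounds x : - Rabs x <= x <= Rabs x.
Proof. split; [generalize (Rle_abs (- x)); rewrite Rabs_Ropp; lra | apply Rle_abs]. Qed.

Section ImproperIntegral.
Variable h : R -> R.

Lemma is_RInt_gen_approx l :
  is_RInt_gen h at_minf at_pinf l -> forall eps : posreal,
  exists A B, forall a b, a < A -> B < b ->
    exists y, is_RInt h a b y /\ Rabs (y - l) < eps.
Proof.
  intros Hl eps.
  destruct (Hl _ (locally_ball l eps)) as [Q Q' [A HA] [B HB] HQ].
  exists A, B; intros a b Ha Hb.
  exact (HQ a b (HA a Ha) (HB b Hb)).
Qed.

Lemma is_RInt_gen_approx_left t l :
  is_RInt_gen h at_minf (at_point t) l -> forall eps : posreal,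
  exists A, forall a, a < A -> exists y, is_RInt h a t y /\ Rabs (y - l) < eps.
Proof.
  intros Hl eps.
  destruct (Hl _ (locally_ball l eps)) as [Q Q' [A HA] Ht HQ].
  exists A; intros a Ha.
  exact (HQ a t (HA a Ha) Ht).
Qed.

Lemma is_RInt_gen_ex_RInt l :
  is_RInt_gen h at_minf at_pinf l -> forall x y, ex_RInt h x y.
Proof.
  intros Hl x y.
  destruct (is_RInt_gen_approx l Hl (mkposreal 1 Rlt_0_1)) as [A [B HAB]].
  set (e := Rabs x + Rabs y + Rabs A + Rabs B + 1).
  generalize (Rabs_bounds x) (Rabs_bounds y) (Rabs_bounds A) (Rabs_bounds B); intros.
  destruct (HAB (0 - e) (0 + e)) as [v [Hv _]]; try (unfold e; lra).
  apply (ex_RInt_inside h x y 0 e); [now exists v | |];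
    apply Rabs_le; unfold e; lra.
Qed.

Lemma is_RInt_gen_ge l c :
  is_RInt_gen h at_minf at_pinf l ->
  (exists A B, forall a b, a < A -> B < b -> c <= RInt h a b) -> c <= l.
Proof.
  intros Hl [A0 [B0 HAB]].
  destruct (Rle_or_lt c l) as [|Hlc]; [easy|].
  destruct (is_RInt_gen_approx l Hl (mkposreal (c - l) ltac:(lra))) as [A [B HP]].
  destruct (HP (Rmin A A0 - 1) (Rmax B B0 + 1)) as [y [Hy Hyl]];
    [generalize (Rmin_l A A0); lra | generalize (Rmax_l B B0); lra |].
  assert (c <= RInt h (Rmin A A0 - 1) (Rmax B B0 + 1)).
  { apply HAB; [generalize (Rmin_r A A0) | generalize (Rmax_r B B0)]; lra. }
  rewrite (is_RInt_unique _ _ _ _ Hy) in H.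
  apply Rabs_def2 in Hyl; simpl in Hyl; lra.
Qed.

Lemma is_RInt_gen_ge_RInt l a b :
  (forall t, 0 <= h t) -> is_RInt_gen h at_minf at_pinf l -> a <= b ->
  RInt h a b <= l.
Proof.
  intros Hh Hl Hab.
  assert (Hint := is_RInt_gen_ex_RInt l Hl).
  apply (is_RInt_gen_ge l _ Hl); exists a, b; intros a' b' Ha' Hb'.
  rewrite <- (RInt_Chasles h a' a b'), <- (RInt_Chasles h a b b') by apply Hint.
  assert (0 <= RInt h a' a) by (apply RInt_ge_0; [lra | apply Hint | intros; apply Hh]).
  assert (0 <= RInt h b b') by (apply RInt_ge_0; [lra | apply Hint | intros; apply Hh]).
  change (RInt h a b <= RInt h a' a + (RInt h a b + RInt h b b')); lra.
Qed.

End ImproperIntegral.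

Definition is_mode (f : R -> R) (m0 : R) : Prop :=
  (forall x y, x <= y -> y <= m0 -> f x <= f y) /\
  (forall x y, m0 <= x -> x <= y -> f y <= f x).

Section Density.
Variables F f : R -> R.
Hypothesis Hcdf : cdf_with_density F f.

Lemma density_nonneg t : 0 <= f t.
Proof. apply Hcdf. Qed.

Lemma density_ex_RInt x y : ex_RInt f x y.
Proof. exact (is_RInt_gen_ex_RInt f 1 (proj2 (proj2 Hcdf)) x y). Qed.

Lemma cdf_increment x y : F y - F x = RInt f x y.
Proof.
  destruct Hcdf as [_ [HF _]].
  assert (Hxy : is_RInt_gen f (at_point x) (at_point y) (RInt f x y)).
  { apply is_RInt_gen_at_point, (@RInt_correct R_CompleteNormedModule), density_ex_RInt. }
  assert (H := is_RInt_gen_Chasles f x _ _ (HF x) Hxy).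
  rewrite <- (is_RInt_gen_unique _ _ (HF y)), (is_RInt_gen_unique _ _ H).
  change (F x + RInt f x y - F x = RInt f x y); ring.
Qed.

Lemma cdf_nondecreasing x y : x <= y -> F x <= F y.
Proof.
  intros Hxy.
  assert (0 <= RInt f x y)
    by (apply RInt_ge_0; [easy | apply density_ex_RInt | intros; apply density_nonneg]).
  rewrite <- cdf_increment in H; lra.
Qed.

Lemma cdf_increment_le x y Mf : x <= y -> (forall t, x <= t <= y -> f t <= Mf) ->
  0 <= F y - F x <= (y - x) * Mf.
Proof.
  intros Hxy Hf.
  split; [generalize (cdf_nondecreasing x y Hxy); lra |].
  rewrite cdf_increment.
  eapply Rle_trans; [apply Rle_abs |].
  apply abs_RInt_le_const; [easy | apply density_ex_RInt |].
  intros t Ht; rewrite Rabs_pos_eq by apply density_nonneg; auto.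
Qed.

Lemma cdf_continuous x : continuous F x.
Proof.
  apply (continuous_ext (fun z => (F z - F (x - 1)) + F (x - 1))); [intros z; simpl; ring |].
  apply (continuous_plus (fun z => F z - F (x - 1))); [| apply continuous_const].
  apply (continuous_RInt_1 f (x - 1)).
  apply filter_forall; intros z.
  rewrite cdf_increment; apply (@RInt_correct R_CompleteNormedModule), density_ex_RInt.
Qed.

Lemma cdf_nonneg t : 0 <= F t.
Proof.
  destruct Hcdf as [Hf [HF _]].
  assert (H0 := is_RInt_gen_scal _ 0 _ (HF t)).
  apply Rle_trans with (norm (scal 0 (F t))); [apply norm_ge_0 |].
  refine (RInt_gen_norm _ f _ _ _ _ H0 (HF t)).
  - exists (fun a => a < t) (fun b => b = t); [now exists t | easy |].
    intros a b Ha ->; simpl; lra.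
  - exists (fun _ => True) (fun _ => True); [now exists 0 | easy |].
    intros a b _ _ x _; change (Rabs (0 * f x) <= f x).
    rewrite Rmult_0_l, Rabs_R0; apply Hf.
Qed.

Lemma cdf_lim_p_infty (eps : posreal) :
  exists B, forall b, B < b -> Rabs (F b - 1) < eps.
Proof.
  destruct Hcdf as [_ [HF Htot]].
  set (e2 := pos_div_2 eps).
  destruct (is_RInt_gen_approx f 1 Htot e2) as [A [B HAB]].
  exists B; intros b Hb.
  destruct (is_RInt_gen_approx_left f b (F b) (HF b) e2) as [A1 H1].
  set (a := Rmin A A1 - 1).
  destruct (H1 a) as [y1 [Hy1 Hy1']]; [unfold a; generalize (Rmin_r A A1); lra |].
  destruct (HAB a b) as [y2 [Hy2 Hy2']]; [unfold a; generalize (Rmin_l A A1); lra | easy |].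
  assert (y1 = y2) as <-.
  { rewrite <- (is_RInt_unique _ _ _ _ Hy1); exact (is_RInt_unique _ _ _ _ Hy2). }
  apply Rabs_def2 in Hy1'; apply Rabs_def2 in Hy2'; simpl in *.
  apply Rabs_def1; lra.
Qed.

Lemma cdf_increment_ge x y m : x <= y -> (forall t, x <= t <= y -> m <= f t) ->
  (y - x) * m <= F y - F x.
Proof.
  intros Hxy Hf.
  rewrite cdf_increment.
  assert (H : RInt (fun _ => m) x y <= RInt f x y).
  { apply RInt_le; [easy | apply ex_RInt_const | apply density_ex_RInt |].
    intros; apply Hf; lra. }
  rewrite RInt_const in H; exact H.
Qed.

Lemma cdf_le_1 t : F t <= 1.
Proof.
  destruct (Rle_or_lt (F t) 1) as [|Ht]; [easy | exfalso].
  destruct (cdf_lim_p_infty (mkposreal (F t - 1) ltac:(lra))) as [B HB].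
  assert (Hb := HB (Rmax B t + 1) ltac:(generalize (Rmax_l B t); lra)).
  assert (F t <= F (Rmax B t + 1))
    by (apply cdf_nondecreasing; generalize (Rmax_r B t); lra).
  apply Rabs_def2 in Hb; simpl in Hb; lra.
Qed.

Lemma cdf_range t : 0 <= F t <= 1.
Proof. split; [apply cdf_nonneg | apply cdf_le_1]. Qed.

Lemma cdf_lim_m_infty (eps : posreal) : exists A, forall a, a < A -> F a < eps.
Proof.
  destruct Hcdf as [_ [_ Htot]].
  destruct (is_RInt_gen_approx f 1 Htot eps) as [A [B HAB]].
  exists A; intros a Ha.
  destruct (HAB a (Rmax A B + 1) Ha) as [y [Hy Hyl]]; [generalize (Rmax_r A B); lra |].
  rewrite <- (is_RInt_unique _ _ _ _ Hy), <- cdf_increment in Hyl.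
  apply Rabs_def2 in Hyl; generalize (cdf_le_1 (Rmax A B + 1)); lra.
Qed.

Lemma cdf_attains y : 0 < y < 1 -> exists t, F t = y.
Proof.
  intros Hy.
  destruct (cdf_lim_m_infty (mkposreal y ltac:(lra))) as [A HA].
  destruct (cdf_lim_p_infty (mkposreal (1 - y) ltac:(lra))) as [B HB].
  assert (HFA := HA (A - 1) ltac:(lra)); simpl in HFA.
  assert (HFB := HB (B + 1) ltac:(lra)); apply Rabs_def2 in HFB; simpl in HFB.
  destruct (IVT_gen_consistent F (A - 1) (B + 1) y cdf_continuous) as [t [_ Ht]];
    [| now exists t].
  split; [apply Rle_trans with (F (A - 1)); [apply Rmin_l | lra]
         | apply Rle_trans with (F (B + 1)); [lra | apply Rmax_r]].
Qed.

Lemma density_pos_somewhere : exists t, 0 < f t.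
Proof.
  apply not_all_not_ex; intros Hf.
  destruct (cdf_lim_m_infty (mkposreal (1/2) ltac:(lra))) as [A HA].
  destruct (cdf_lim_p_infty (mkposreal (1/2) ltac:(lra))) as [B HB].
  assert (Ha := HA (A - 1) ltac:(lra)); simpl in Ha.
  assert (Hb := HB (Rmax A B + 1) ltac:(generalize (Rmax_r A B); lra)).
  apply Rabs_def2 in Hb; simpl in Hb.
  destruct (cdf_increment_le (A - 1) (Rmax A B + 1) 0) as [_ Hle];
    [generalize (Rmax_l A B); lra | intros s _; apply Rnot_lt_le, Hf |].
  lra.
Qed.

Lemma density_mode : unimodal f -> exists m0, is_mode f m0.
Proof.
  intros [m Hm].
  destruct density_pos_somewhere as [t0 Ht0].
  assert (Hd : 0 < 2 / f t0) by (apply Rdiv_lt_0_compat; lra).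
  destruct m as [m0 | |].
  - exists m0; split.
    + intros x y Hxy Hy; apply (Hm x y I I Hxy); exact Hy.
    + intros x y Hx Hxy; apply (Hm x y I I Hxy); exact Hx.
  - exfalso.
    assert (H := cdf_increment_ge t0 (t0 + 2 / f t0) (f t0) ltac:(lra)).
    replace ((t0 + 2 / f t0 - t0) * f t0) with 2 in H by (field; lra).
    assert (Hup : forall t, t0 <= t <= t0 + 2 / f t0 -> f t0 <= f t)
      by (intros t Ht; apply (Hm t0 t I I (proj1 Ht)); exact I).
    generalize (H Hup) (cdf_le_1 (t0 + 2 / f t0)) (cdf_nonneg t0); lra.
  - exfalso.
    assert (H := cdf_increment_ge (t0 - 2 / f t0) t0 (f t0) ltac:(lra)).
    replace ((t0 - (t0 - 2 / f t0)) * f t0) with 2 in H by (field; lra).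
    assert (Hdown : forall t, t0 - 2 / f t0 <= t <= t0 -> f t0 <= f t)
      by (intros t Ht; apply (Hm t t0 I I (proj2 Ht)); exact I).
    generalize (H Hdown) (cdf_le_1 t0) (cdf_nonneg (t0 - 2 / f t0)); lra.
Qed.

End Density.

Lemma nonneg_of_forall_ge_div_INR (X E : R) :
  (forall N, (0 < N)%nat -> - E / INR N <= X) -> 0 <= X.
Proof.
  intros H.
  destruct (Rle_or_lt 0 X) as [|HX]; [easy | exfalso].
  assert (HE := Rabs_pos E).
  destruct (archimed_cor1 (- X / (Rabs E + 1))) as [N [HN HN0]];
    [apply Rdiv_lt_0_compat; lra |].
  specialize (H N HN0).
  assert (HINR : 0 < INR N) by (apply lt_0_INR; lia).
  apply (Rmult_lt_compat_l (Rabs E + 1)) in HN; [| lra].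
  replace ((Rabs E + 1) * (- X / (Rabs E + 1))) with (- X) in HN by (field; lra).
  assert (E <= Rabs E) by apply Rle_abs.
  assert (E * / INR N <= Rabs E * / INR N)
    by (apply Rmult_le_compat_r; [left; apply Rinv_0_lt_compat |]; lra).
  assert (0 < / INR N) by (apply Rinv_0_lt_compat; lra).
  unfold Rdiv in H; lra.
Qed.

(* A discrete form of the second mean value theorem: sum the local bounds over a
   uniform subdivision and use Abel summation, the error tending to 0. *)
Lemma abel_nondecreasing (G w Q : R -> R) (K C a b : R) :
  a <= b -> 0 <= w a ->
  (forall x y, a <= x -> x <= y -> y <= b -> w x <= w y) ->
  (forall t, a <= t <= b -> Q t <= Q b) ->
  (forall x y, a <= x -> x <= y -> y <= b ->
     w x * (Q y - Q x) - K * (y - x) * (w y - w x) - C * (y - x) ^ 2 <= G y - G x) ->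
  G a <= G b.
Proof.
  intros Hab Hwa Hw HQ Hloc.
  cut (0 <= G b - G a); [lra |].
  apply (nonneg_of_forall_ge_div_INR _ ((b - a) * (K * (w b - w a) + C * (b - a)))).
  intros N HN.
  assert (HINR : 0 < INR N) by (apply lt_0_INR; lia).
  set (d := (b - a) / INR N).
  assert (Hd : 0 <= d) by (apply Rdiv_le_0_compat; lra).
  set (x k := a + INR k * d).
  assert (Hx : forall k, (k <= N)%nat -> a <= x k <= b).
  { intros k Hk; unfold x.
    assert (INR k <= INR N) by (apply le_INR; lia).
    assert (0 <= INR k) by apply pos_INR.
    assert (INR N * d = b - a) by (unfold d; field; lra).
    nra. }
  assert (Hstep : forall k, (k <= N)%nat ->
    w (x k) * (Q (x k) - Q b) - K * d * (w (x k) - w a) - INR k * (C * d ^ 2)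
      <= G (x k) - G a).
  { induction k as [|k IH]; intros Hk.
    - unfold x; simpl; rewrite Rmult_0_l, Rplus_0_r.
      assert (Q a <= Q b) by (apply HQ; lra).
      assert (w a * (Q a - Q b) <= 0) by nra.
      lra.
    - specialize (IH ltac:(lia)).
      destruct (Hx k ltac:(lia)) as [Hk1 Hk2].
      destruct (Hx (S k) Hk) as [HSk1 HSk2].
      assert (HxS : x (S k) = x k + d) by (unfold x; rewrite S_INR; ring).
      assert (Hl := Hloc (x k) (x (S k)) Hk1 ltac:(lra) HSk2).
      replace (x (S k) - x k) with d in Hl by lra.
      assert (w (x k) <= w (x (S k))) by (apply Hw; lra).
      assert (Q (x (S k)) <= Q b) by (apply HQ; lra).
      assert ((w (x (S k)) - w (x k)) * (Q (x (S k)) - Q b) <= 0)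
        by nra.
      rewrite S_INR; lra. }
  specialize (Hstep N (le_n N)).
  replace (x N) with b in Hstep by (unfold x, d; field; lra).
  replace (- ((b - a) * (K * (w b - w a) + C * (b - a))) / INR N)
    with (w b * (Q b - Q b) - K * d * (w b - w a) - INR N * (C * d ^ 2))
    by (unfold d; field; lra).
  exact Hstep.
Qed.

(* The mirror image of [abel_nondecreasing] under t |-> -t. *)
Lemma abel_nonincreasing (G w Q : R -> R) (K C a b : R) :
  a <= b -> 0 <= w b ->
  (forall x y, a <= x -> x <= y -> y <= b -> w y <= w x) ->
  (forall t, a <= t <= b -> Q a <= Q t) ->
  (forall x y, a <= x -> x <= y -> y <= b ->
     w y * (Q y - Q x) - K * (y - x) * (w x - w y) - C * (y - x) ^ 2 <= G y - G x) ->
  G a <= G b.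
Proof.
  intros Hab Hwb Hw HQ Hloc.
  assert (H := abel_nondecreasing (fun t => - G (- t)) (fun t => w (- t))
                 (fun t => - Q (- t)) K C (- b) (- a)); simpl in H.
  rewrite !Ropp_involutive in H.
  cut (- G b <= - G a); [lra |].
  apply H; [lra | easy | intros x y Hx Hxy Hy | intros t Ht | intros x y Hx Hxy Hy].
  - apply Hw; lra.
  - assert (Q a <= Q (- t)) by (apply HQ; lra); lra.
  - assert (Hl := Hloc (- y) (- x) ltac:(lra) ltac:(lra) ltac:(lra)).
    replace (- x - - y) with (y - x) in Hl by ring.
    lra.
Qed.

Lemma RInt_affine (f : R -> R) (al be x y : R) : ex_RInt f x y ->
  RInt (fun t => al * f t + be) x y = al * RInt f x y + be * (y - x) :> R.
Proof.
  intros Hf.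
  change (RInt (fun t => plus (scal al (f t)) ((fun _ => be) t)) x y
    = al * RInt f x y + be * (y - x)).
  rewrite (@RInt_plus R_CompleteNormedModule);
    [| exact (ex_RInt_scal f x y al Hf) | apply ex_RInt_const].
  rewrite (@RInt_scal R_CompleteNormedModule), (@RInt_const R_CompleteNormedModule) by easy.
  change (al * RInt f x y + (y - x) * be = al * RInt f x y + be * (y - x)); ring.
Qed.

Lemma ex_RInt_affine (f : R -> R) (al be x y : R) : ex_RInt f x y ->
  ex_RInt (fun t => al * f t + be) x y.
Proof.
  intros Hf.
  apply (ex_RInt_plus (fun t => al * f t) (fun _ => be));
    [apply (ex_RInt_scal f x y al Hf) | apply ex_RInt_const].
Qed.

Lemma taylor1_lipschitz (P P1 : R -> R) (L u v w : R) :
  (forall s, is_derive P s (P1 s)) -> 0 <= L ->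
  (forall s s', u <= s <= v -> u <= s' <= v -> Rabs (P1 s - P1 s') <= L * Rabs (s - s')) ->
  u <= w <= v ->
  P v - P u <= P1 w * (v - u) + L * (v - u) ^ 2.
Proof.
  intros HP HL0 HL Hw.
  destruct (MVT_gen P u v P1) as [xi [Hxi Heq]].
  - intros; apply HP.
  - intros s _; apply continuity_pt_filterlim, (ex_derive_continuous P).
    now exists (P1 s).
  - rewrite Rmin_left, Rmax_right in Hxi by lra.
    assert (Hdiff : P1 xi - P1 w <= L * (v - u)).
    { apply Rle_trans with (1 := Rle_abs _).
      eapply Rle_trans; [apply HL; easy |].
      apply Rmult_le_compat_l; [easy |].
      apply Rabs_le; lra. }
    rewrite Heq.
    assert ((P1 xi - P1 w) * (v - u) <= L * (v - u) * (v - u))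
      by (apply Rmult_le_compat_r; lra).
    lra.
Qed.

Definition crosses_up_at (P : R -> R) (um : R) : Prop :=
  forall u, 0 <= u <= 1 -> (u <= um -> P u <= P um) /\ (um <= u -> P um <= P u).

Section WeightedIntegral.
Variables (F f P P1 : R -> R) (Mf Mp L : R).
Hypothesis Hcdf : cdf_with_density F f.
Hypothesis Hf_le : forall t, f t <= Mf.
Hypothesis HP : forall u, is_derive P u (P1 u).
Hypothesis HP1_le : forall u, 0 <= u <= 1 -> Rabs (P1 u) <= Mp.
Hypothesis HL0 : 0 <= L.
Hypothesis HP1_lip : forall u v, 0 <= u <= 1 -> 0 <= v <= 1 ->
  Rabs (P1 u - P1 v) <= L * Rabs (u - v).
Hypothesis Hint : forall x y, ex_RInt (fun t => P1 (F t) * f t ^ 2) x y.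

Let h t := P1 (F t) * f t ^ 2.

Lemma weighted_integrand_lower x y z t D : x <= z <= y -> x <= t <= y ->
  Rabs (f t - f z) <= D ->
  P1 (F z) * f z * f t - (Mp * Mf * D + L * Mf ^ 3 * (y - x)) <= h t.
Proof.
  intros Hz Ht HD.
  assert (Hf0 := density_nonneg F f Hcdf).
  assert (HFt : forall s, x <= s <= y -> F x <= F s <= F y)
    by (intros s Hs; split; apply (cdf_nondecreasing F f Hcdf); lra).
  destruct (cdf_increment_le F f Hcdf x y Mf ltac:(lra) (fun s _ => Hf_le s)) as [_ HdF].
  set (c := P1 (F z)).
  assert (Hc : Rabs c <= Mp) by apply HP1_le, (cdf_range F f Hcdf).
  assert (Hft := Hf_le t); assert (Hft0 := Hf0 t).
  assert (H1 : Rabs (P1 (F t) - c) <= L * (Mf * (y - x))).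
  { eapply Rle_trans; [apply HP1_lip; apply (cdf_range F f Hcdf) |].
    apply Rmult_le_compat_l; [easy |].
    apply Rabs_le; generalize (HFt t Ht) (HFt z Hz); lra. }
  assert (H2 : Rabs (c * f t * (f t - f z)) <= Mp * Mf * D).
  { rewrite !Rabs_mult, (Rabs_pos_eq (f t)) by easy.
    apply Rmult_le_compat; try apply Rmult_le_pos; auto using Rabs_pos.
    apply Rmult_le_compat; auto using Rabs_pos. }
  generalize (Rabs_bounds (P1 (F t) - c)) (Rabs_bounds (c * f t * (f t - f z))); intros.
  assert (H3 : - (L * (Mf * (y - x))) * f t ^ 2 <= (P1 (F t) - c) * f t ^ 2)
    by (apply Rmult_le_compat_r; [apply pow2_ge_0 | lra]).
  assert (H4 : f t ^ 2 <= Mf ^ 2) by (apply pow_incr; lra).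
  assert (H5 : L * (Mf * (y - x)) * f t ^ 2 <= L * (Mf * (y - x)) * Mf ^ 2)
    by (apply Rmult_le_compat_l; [apply Rmult_le_pos; [| apply Rmult_le_pos] |]; lra).
  unfold h; nra.
Qed.

Lemma weighted_RInt_local x y z D : x <= z <= y ->
  (forall t, x <= t <= y -> Rabs (f t - f z) <= D) ->
  f z * (P (F y) - P (F x)) - Mp * Mf * (y - x) * D - 2 * L * Mf ^ 3 * (y - x) ^ 2
    <= RInt h x y.
Proof.
  intros Hz HD.
  assert (Hf0 := density_nonneg F f Hcdf).
  assert (HMf : 0 <= Mf) by (generalize (Hf0 z) (Hf_le z); lra).
  destruct (cdf_increment_le F f Hcdf x y Mf ltac:(lra) (fun t _ => Hf_le t)) as [HdF0 HdF].
  set (c := P1 (F z)).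
  set (K := Mp * Mf * D + L * Mf ^ 3 * (y - x)).
  assert (Hlin : c * f z * (F y - F x) - K * (y - x) <= RInt h x y).
  { rewrite (cdf_increment F f Hcdf).
    assert (Hf := density_ex_RInt F f Hcdf x y).
    assert (Haff := RInt_affine f (c * f z) (- K) x y Hf).
    assert (RInt (fun t => c * f z * f t + - K) x y <= RInt h x y).
    { apply RInt_le; [lra | apply ex_RInt_affine, Hf | apply Hint |].
      intros t Ht; generalize (weighted_integrand_lower x y z t D Hz ltac:(lra) (HD t ltac:(lra))).
      fold c K; lra. }
    lra. }
  assert (Htaylor : P (F y) - P (F x) <= c * (F y - F x) + L * (F y - F x) ^ 2).
  { apply taylor1_lipschitz; [exact HP | exact HL0 | |].
    - intros s s' Hs Hs'; apply HP1_lip;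
        generalize (cdf_range F f Hcdf x) (cdf_range F f Hcdf y); lra.
    - split; apply (cdf_nondecreasing F f Hcdf); lra. }
  assert (HdF2 : (F y - F x) ^ 2 <= (Mf * (y - x)) ^ 2) by (apply pow_incr; lra).
  assert (Hfz : f z * (L * (F y - F x) ^ 2) <= Mf * (L * (Mf * (y - x)) ^ 2)).
  { apply Rmult_le_compat; [apply Hf0 | apply Rmult_le_pos, pow2_ge_0; easy | apply Hf_le |].
    apply Rmult_le_compat_l; easy. }
  assert (f z * (P (F y) - P (F x)) <= f z * (c * (F y - F x) + L * (F y - F x) ^ 2))
    by (apply Rmult_le_compat_l; [apply Hf0 | easy]).
  unfold K in Hlin; nra.
Qed.

Let RInt_h_Chasles a x y : RInt h a y - RInt h a x = RInt h x y.
Proof.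
  rewrite <- (RInt_Chasles h a x y) by apply Hint.
  change (RInt h a x + RInt h x y - RInt h a x = RInt h x y); ring.
Qed.

Lemma weighted_RInt_nonneg_nondecreasing a b : a <= b ->
  (forall x y, a <= x -> x <= y -> y <= b -> f x <= f y) ->
  (forall t, a <= t <= b -> P (F t) <= P (F b)) ->
  0 <= RInt h a b.
Proof.
  intros Hab Hf HQ.
  cut (RInt h a a <= RInt h a b); [rewrite RInt_point; easy |].
  apply (abel_nondecreasing (RInt h a) f (fun t => P (F t)) (Mp * Mf) (2 * L * Mf ^ 3));
    [easy | apply (density_nonneg F f Hcdf) | easy | easy |].
  intros x y Hx Hxy Hy.
  rewrite RInt_h_Chasles.
  assert (H := weighted_RInt_local x y x (f y - f x) ltac:(lra)).
  assert (f x * (P (F y) - P (F x)) - Mp * Mf * (y - x) * (f y - f x) - 2 * L * Mf ^ 3 * (y - x) ^ 2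
            <= RInt h x y).
  { apply H; intros t Ht.
    assert (f x <= f t) by (apply Hf; lra); assert (f t <= f y) by (apply Hf; lra).
    rewrite Rabs_pos_eq; lra. }
  lra.
Qed.

Lemma weighted_RInt_nonneg_nonincreasing a b : a <= b ->
  (forall x y, a <= x -> x <= y -> y <= b -> f y <= f x) ->
  (forall t, a <= t <= b -> P (F a) <= P (F t)) ->
  0 <= RInt h a b.
Proof.
  intros Hab Hf HQ.
  cut (RInt h a a <= RInt h a b); [rewrite RInt_point; easy |].
  apply (abel_nonincreasing (RInt h a) f (fun t => P (F t)) (Mp * Mf) (2 * L * Mf ^ 3));
    [easy | apply (density_nonneg F f Hcdf) | easy | easy |].
  intros x y Hx Hxy Hy.
  rewrite RInt_h_Chasles.
  assert (H := weighted_RInt_local x y y (f x - f y) ltac:(lra)).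
  assert (f y * (P (F y) - P (F x)) - Mp * Mf * (y - x) * (f x - f y) - 2 * L * Mf ^ 3 * (y - x) ^ 2
            <= RInt h x y).
  { apply H; intros t Ht.
    assert (f t <= f x) by (apply Hf; lra); assert (f y <= f t) by (apply Hf; lra).
    rewrite Rabs_pos_eq; lra. }
  lra.
Qed.

Lemma weighted_integral_nonneg_of_mode m0 l : is_mode f m0 -> crosses_up_at P (F m0) ->
  is_RInt_gen h at_minf at_pinf l -> 0 <= l.
Proof.
  intros [Hup Hdown] Hcross Hl.
  apply (is_RInt_gen_ge h l 0 Hl); exists m0, m0; intros a b Ha Hb.
  rewrite <- (RInt_Chasles h a m0 b) by apply Hint.
  apply Rplus_le_le_0_compat.
  - apply weighted_RInt_nonneg_nondecreasing; [lra | intros; apply Hup; lra |].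
    intros t Ht; apply (Hcross (F t) (cdf_range F f Hcdf t)).
    apply (cdf_nondecreasing F f Hcdf); lra.
  - apply weighted_RInt_nonneg_nonincreasing; [lra | intros; apply Hdown; lra |].
    intros t Ht; apply (Hcross (F t) (cdf_range F f Hcdf t)).
    apply (cdf_nondecreasing F f Hcdf); lra.
Qed.

End WeightedIntegral.

Definition smooth_weight (P P1 : R -> R) : Prop :=
  exists P2 L, (forall u, is_derive P u (P1 u)) /\ (forall u, is_derive P1 u (P2 u)) /\
    (forall u, 0 <= u <= 1 -> Rabs (P2 u) <= L).

Lemma smooth_weight_lipschitz P P1 : smooth_weight P P1 ->
  exists L, 0 <= L /\ forall u v, 0 <= u <= 1 -> 0 <= v <= 1 ->
    Rabs (P1 u - P1 v) <= L * Rabs (u - v).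
Proof.
  intros [P2 [L [_ [HP1 HP2]]]].
  exists L; split; [apply Rle_trans with (1 := Rabs_pos (P2 0)), HP2; lra |].
  intros u v Hu Hv.
  destruct (MVT_gen P1 v u P2) as [xi [Hxi ->]].
  - intros; apply HP1.
  - intros s _; apply continuity_pt_filterlim, (ex_derive_continuous P1).
    now exists (P2 s).
  - rewrite Rabs_mult; apply Rmult_le_compat_r; [apply Rabs_pos |].
    apply HP2; split.
    + apply Rle_trans with (2 := proj1 Hxi), Rmin_glb; lra.
    + apply Rle_trans with (1 := proj2 Hxi), Rmax_lub; lra.
Qed.

Lemma smooth_weight_lincomb P P1 Q Q1 al ga :
  smooth_weight P P1 -> smooth_weight Q Q1 ->
  smooth_weight (fun u => al * P u + ga * Q u) (fun u => al * P1 u + ga * Q1 u).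
Proof.
  intros [P2 [L [HP [HP1 HP2]]]] [Q2 [L' [HQ [HQ1 HQ2]]]].
  exists (fun u => al * P2 u + ga * Q2 u), (Rabs al * L + Rabs ga * L').
  split; [| split].
  - intros u; apply (is_derive_plus (fun u => al * P u) (fun u => ga * Q u));
      apply is_derive_scal; auto.
  - intros u; apply (is_derive_plus (fun u => al * P1 u) (fun u => ga * Q1 u));
      apply is_derive_scal; auto.
  - intros u Hu; eapply Rle_trans; [apply Rabs_triang |]; rewrite !Rabs_mult.
    apply Rplus_le_compat; apply Rmult_le_compat_l; auto using Rabs_pos.
Qed.

Theorem weighted_integral_nonneg F f P P1 m0 l :
  cdf_with_density F f -> is_mode f m0 -> smooth_weight P P1 -> crosses_up_at P (F m0) ->
  is_RInt_gen (fun t => P1 (F t) * f t ^ 2) at_minf at_pinf l -> 0 <= l.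
Proof.
  intros Hcdf Hmode Hw Hcross Hl.
  destruct (smooth_weight_lipschitz P P1 Hw) as [L [HL0 HL]].
  destruct Hw as [P2 [L2 [HP _]]].
  assert (Hf_le : forall t, f t <= f m0).
  { intros t; destruct (Rle_or_lt t m0); [apply (proj1 Hmode) | apply (proj2 Hmode)]; lra. }
  assert (HP1_le : forall u, 0 <= u <= 1 -> Rabs (P1 u) <= Rabs (P1 0) + L).
  { intros u Hu.
    assert (H := HL u 0 Hu ltac:(lra)).
    assert (Rabs (P1 u) <= Rabs (P1 0) + Rabs (P1 u - P1 0)).
    { replace (P1 u) with (P1 0 + (P1 u - P1 0)) at 1 by ring; apply Rabs_triang. }
    assert (L * Rabs (u - 0) <= L) by (rewrite Rminus_0_r, Rabs_pos_eq by lra; nra).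
    lra. }
  exact (weighted_integral_nonneg_of_mode F f P P1 (f m0) _ L Hcdf Hf_le HP HP1_le HL0 HL
           (is_RInt_gen_ex_RInt _ _ Hl) m0 l Hmode Hcross Hl).
Qed.

Definition bern (a b : nat) (u : R) : R := u ^ a * (1 - u) ^ b.
Definition dbern (a b : nat) (u : R) : R := INR a * bern (pred a) b u - INR b * bern a (pred b) u.
Definition d2bern (a b : nat) (u : R) : R :=
  INR a * dbern (pred a) b u - INR b * dbern a (pred b) u.

Lemma bern_is_derive a b u : is_derive (bern a b) u (dbern a b u).
Proof.
  unfold dbern; unfold bern at 1; auto_derive; [easy |].
  unfold bern, Rminus; ring.
Qed.

Lemma dbern_is_derive a b u : is_derive (dbern a b) u (d2bern a b u).
Proof.
  apply (is_derive_minus (fun u => INR a * bern (pred a) b u) (fun u => INR b * bern a (pred b) u));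
    apply is_derive_scal, bern_is_derive.
Qed.

Lemma bern_range a b u : 0 <= u <= 1 -> 0 <= bern a b u <= 1.
Proof.
  intros Hu; unfold bern.
  assert (Ha := pow_incr u 1 a ltac:(lra)); assert (Hb := pow_incr (1 - u) 1 b ltac:(lra)).
  rewrite pow1 in Ha, Hb.
  assert (0 <= u ^ a) by (apply pow_le; lra); assert (0 <= (1 - u) ^ b) by (apply pow_le; lra).
  split; nra.
Qed.

Lemma dbern_bound a b u : 0 <= u <= 1 -> Rabs (dbern a b u) <= INR a + INR b.
Proof.
  intros Hu; unfold dbern.
  assert (H1 := bern_range (pred a) b u Hu); assert (H2 := bern_range a (pred b) u Hu).
  assert (0 <= INR a) by apply pos_INR; assert (0 <= INR b) by apply pos_INR.
  apply Rabs_le; split; nra.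
Qed.

Lemma smooth_weight_bern a b : smooth_weight (bern a b) (dbern a b).
Proof.
  exists (d2bern a b), (INR a * (INR (pred a) + INR b) + INR b * (INR a + INR (pred b))).
  split; [exact (bern_is_derive a b) | split; [exact (dbern_is_derive a b) |]].
  intros u Hu; unfold d2bern.
  assert (0 <= INR a) by apply pos_INR; assert (0 <= INR b) by apply pos_INR.
  eapply Rle_trans; [apply Rabs_triang |].
  rewrite Rabs_Ropp, !Rabs_mult, (Rabs_pos_eq (INR a)), (Rabs_pos_eq (INR b)) by easy.
  apply Rplus_le_compat; apply Rmult_le_compat_l; auto using dbern_bound.
Qed.

Lemma RInt_ge_of_ge_sq (w f : R -> R) (c a b : R) : a < b -> 0 <= c ->
  ex_RInt f a b -> ex_RInt w a b -> (forall t, a < t < b -> c * f t ^ 2 <= w t) ->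
  c * RInt f a b ^ 2 / (b - a) <= RInt w a b.
Proof.
  intros Hab Hc Hf Hw Hcw.
  set (lam := RInt f a b / (b - a)).
  assert (H : RInt (fun t => (2 * c * lam) * f t + - (c * lam ^ 2)) a b <= RInt w a b).
  { apply RInt_le; [lra | now apply ex_RInt_affine | easy |].
    intros t Ht; specialize (Hcw t Ht).
    assert (0 <= c * (f t - lam) ^ 2) by (apply Rmult_le_pos; [easy | apply pow2_ge_0]).
    nra. }
  rewrite RInt_affine in H by easy.
  replace (c * RInt f a b ^ 2 / (b - a))
    with (2 * c * lam * RInt f a b + - (c * lam ^ 2) * (b - a)) by (unfold lam; field; lra).
  exact H.
Qed.

Definition beta_integral (n : nat) (F f : R -> R) (r : nat) : R :=
  RInt_gen (beta_integrand n F f r) at_minf at_pinf.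

Lemma beta_eq n F f r : beta n F f r = Binomial.C (n - 1) (r - 1) * beta_integral n F f r.
Proof. reflexivity. Qed.

Lemma Derive_g n r u : Derive (g n r) u = dbern (n - r) (r - 1) u.
Proof. apply is_derive_unique, bern_is_derive. Qed.

Lemma crosses_up_of_nondecreasing (P : R -> R) um : 0 <= um <= 1 ->
  (forall u v, 0 <= u -> u <= v -> v <= 1 -> P u <= P v) -> crosses_up_at P um.
Proof. intros Hum HP u Hu; split; intros; apply HP; lra. Qed.

Lemma bern_ratio_crosses_up a b um : 0 < um < 1 ->
  crosses_up_at (fun u => / bern (S a) b um * bern (S a) b u
                          + - / bern a (S b) um * bern a (S b) u) um.
Proof.
  intros Hum u Hu.
  assert (Ha : 0 < um ^ a) by (apply pow_lt; lra).
  assert (Hb : 0 < (1 - um) ^ b) by (apply pow_lt; lra).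
  assert (Hratio : 0 <= bern a b u / bern a b um).
  { apply Rdiv_le_0_compat; unfold bern;
      [apply Rmult_le_pos; apply pow_le | apply Rmult_lt_0_compat]; lra. }
  assert (Hum' : 0 < um * (1 - um)) by (apply Rmult_lt_0_compat; lra).
  assert (Hfactor : forall v,
    / bern (S a) b um * bern (S a) b v + - / bern a (S b) um * bern a (S b) v
    = bern a b v / bern a b um * ((v - um) / (um * (1 - um)))).
  { intros v; unfold bern; simpl; field; repeat split; lra. }
  rewrite !Hfactor.
  replace ((um - um) / (um * (1 - um))) with 0 by (field; lra).
  rewrite Rmult_0_r.
  assert (Hinv : 0 < / (um * (1 - um))) by (apply Rinv_0_lt_compat; lra).
  unfold Rdiv at 2; split; intros Hu'.
  - assert ((u - um) * / (um * (1 - um)) <= 0) by nra.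
    nra.
  - apply Rmult_le_pos; [easy | nra].
Qed.

Definition single_crossing (b : nat -> R) (n : nat) : Prop :=
  forall k s, (1 <= k)%nat -> (k < s <= n)%nat -> 0 < b s -> 0 <= b k.

Section BetaIntegrals.
Variables (n : nat) (F f : R -> R).
Hypothesis Hcdf : cdf_with_density F f.
Hypothesis Hex : forall r, (1 <= r <= n)%nat ->
  ex_RInt_gen (beta_integrand n F f r) at_minf at_pinf.

Notation I := (beta_integral n F f).

Let I_correct r : (1 <= r <= n)%nat -> is_RInt_gen (beta_integrand n F f r) at_minf at_pinf (I r).
Proof. intros Hr; exact (RInt_gen_correct _ (Hex r Hr)). Qed.

Variable m0 : R.
Hypothesis Hmode : is_mode f m0.

Lemma beta_integral_lincomb_nonneg al ga j j' :
  (1 <= j <= n)%nat -> (1 <= j' <= n)%nat ->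
  crosses_up_at (fun u => al * g n j u + ga * g n j' u) (F m0) ->
  0 <= al * I j + ga * I j'.
Proof.
  intros Hj Hj' Hcross.
  apply (weighted_integral_nonneg F f
           (fun u => al * bern (n - j) (j - 1) u + ga * bern (n - j') (j' - 1) u)
           (fun u => al * dbern (n - j) (j - 1) u + ga * dbern (n - j') (j' - 1) u)
           m0 _ Hcdf Hmode);
    [apply smooth_weight_lincomb; apply smooth_weight_bern | exact Hcross |].
  assert (H := is_RInt_gen_plus _ _ _ _
                 (is_RInt_gen_scal _ al _ (I_correct j Hj))
                 (is_RInt_gen_scal _ ga _ (I_correct j' Hj'))).
  eapply is_RInt_gen_ext; [| exact H].
  apply (Filter_prod _ _ _ (fun _ => True) (fun _ => True)); [now exists 0 | now exists 0 |].
  intros x y _ _ t _; unfold beta_integrand; rewrite !Derive_g.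
  change (al * (dbern (n - j) (j - 1) (F t) * f t ^ 2)
          + ga * (dbern (n - j') (j' - 1) (F t) * f t ^ 2)
          = (al * dbern (n - j) (j - 1) (F t) + ga * dbern (n - j') (j' - 1) (F t)) * f t ^ 2).
  ring.
Qed.

Lemma beta_integral_scal_nonneg al j : (1 <= j <= n)%nat ->
  crosses_up_at (fun u => al * g n j u) (F m0) -> 0 <= al * I j.
Proof.
  intros Hj Hcross.
  assert (H := beta_integral_lincomb_nonneg al 0 j j Hj Hj).
  rewrite Rmult_0_l, Rplus_0_r in H; apply H.
  intros u Hu; rewrite !Rmult_0_l, !Rplus_0_r; exact (Hcross u Hu).
Qed.

Lemma beta_integral_ratio_step j : 0 < F m0 < 1 -> (1 <= j)%nat -> (S j <= n)%nat ->
  I (S j) / g n (S j) (F m0) <= I j / g n j (F m0).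
Proof.
  intros Hum Hj HjS.
  destruct j as [|b]; [lia |].
  set (a := (n - S (S b))%nat).
  assert (Eg : forall u, g n (S b) u = bern (S a) b u /\ g n (S (S b)) u = bern a (S b) u).
  { intros u; unfold g, bern, a.
    replace (n - S b)%nat with (S (n - S (S b))) by lia.
    replace (S b - 1)%nat with b by lia; replace (S (S b) - 1)%nat with (S b) by lia.
    split; reflexivity. }
  assert (Gpos : forall u, 0 < u < 1 -> 0 < bern (S a) b u /\ 0 < bern a (S b) u).
  { intros u Hu; unfold bern; split; apply Rmult_lt_0_compat; apply pow_lt; lra. }
  destruct (Gpos _ Hum) as [G1 G2].
  assert (H := beta_integral_lincomb_nonneg (/ bern (S a) b (F m0)) (- / bern a (S b) (F m0))
                 (S b) (S (S b)) ltac:(lia) ltac:(lia)).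
  rewrite !(proj1 (Eg _)), !(proj2 (Eg _)).
  assert (0 <= / bern (S a) b (F m0) * I (S b) + - / bern a (S b) (F m0) * I (S (S b))).
  { apply H; intros u Hu.
    rewrite (proj1 (Eg u)), (proj2 (Eg u)), (proj1 (Eg (F m0))), (proj2 (Eg (F m0))).
    exact (bern_ratio_crosses_up a b (F m0) Hum u Hu). }
  unfold Rdiv; lra.
Qed.

Lemma beta_integral_ratio_chain k s : 0 < F m0 < 1 -> (1 <= k)%nat -> (k <= s <= n)%nat ->
  I s / g n s (F m0) <= I k / g n k (F m0).
Proof.
  intros Hum Hk Hks.
  induction s as [|s IH]; [lia |].
  destruct (Nat.eq_dec k (S s)) as [<-|Hne]; [lra |].
  eapply Rle_trans; [apply beta_integral_ratio_step; auto; lia |].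
  apply IH; lia.
Qed.

Lemma beta_integral_single_crossing : single_crossing I n.
Proof.
  intros k s Hk Hks HIs.
  destruct (cdf_range F f Hcdf m0) as [[Hum0 | Hum0] [Hum1 | Hum1]].
  - assert (Hpos : forall r, 0 < g n r (F m0))
      by (intros r; unfold g; apply Rmult_lt_0_compat; apply pow_lt; lra).
    assert (H := beta_integral_ratio_chain k s (conj Hum0 Hum1) Hk ltac:(lia)).
    assert (0 < I s / g n s (F m0)) by (apply Rdiv_lt_0_compat; auto).
    assert (Hk' := Hpos k).
    replace (I k) with (I k / g n k (F m0) * g n k (F m0)) by (field; lra).
    apply Rmult_le_pos; lra.
  - exfalso.
    assert (0 <= -1 * I s); [| lra].
    apply beta_integral_scal_nonneg; [lia |].
    intros u Hu; rewrite Hum1; unfold g.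
    replace (s - 1)%nat with (S (s - 2)) by lia; simpl.
    assert (Hg : 0 <= u ^ (n - s) * (1 - u) ^ S (s - 2))
      by (apply Rmult_le_pos; apply pow_le; lra).
    split; intros; [simpl in Hg; lra | replace u with 1 by lra; lra].
  - assert (0 <= 1 * I k); [| lra].
    apply beta_integral_scal_nonneg; [lia |].
    intros u Hu; rewrite <- Hum0; unfold g.
    replace (n - k)%nat with (S (n - k - 1)) by lia; simpl.
    assert (Hg : 0 <= u ^ S (n - k - 1) * (1 - u) ^ (k - 1))
      by (apply Rmult_le_pos; apply pow_le; lra).
    split; intros; [replace u with 0 by lra; lra | simpl in Hg; lra].
  - lra.
Qed.

Hypothesis Hn : (2 <= n)%nat.

Lemma beta_integral_last_nonpos : I n <= 0.
Proof.
  cut (0 <= -1 * I n); [lra |].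
  apply beta_integral_scal_nonneg; [lia |].
  apply crosses_up_of_nondecreasing; [apply (cdf_range F f Hcdf) |].
  intros u v Hu Huv Hv; unfold g; rewrite Nat.sub_diag; simpl.
  assert ((1 - v) ^ (n - 1) <= (1 - u) ^ (n - 1)) by (apply pow_incr; lra).
  lra.
Qed.

Let beta_integrand_first t : beta_integrand n F f 1 t = INR (n - 1) * F t ^ (n - 2) * f t ^ 2.
Proof.
  unfold beta_integrand; rewrite Derive_g; unfold dbern, bern.
  replace (pred (n - 1)) with (n - 2)%nat by lia; simpl; ring.
Qed.

Lemma beta_integral_first_pos : 0 < I 1.
Proof.
  assert (Hw0 : forall t, 0 <= beta_integrand n F f 1 t).
  { intros t; rewrite beta_integrand_first; apply Rmult_le_pos; [apply Rmult_le_pos |].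
    - apply pos_INR.
    - apply pow_le, (cdf_range F f Hcdf).
    - apply pow2_ge_0. }
  destruct (cdf_attains F f Hcdf (1/2) ltac:(lra)) as [a Ha].
  destruct (cdf_attains F f Hcdf (3/4) ltac:(lra)) as [b Hb].
  assert (Hab : a < b).
  { destruct (Rlt_or_le a b) as [|Hba]; [easy |].
    generalize (cdf_nondecreasing F f Hcdf b a Hba); lra. }
  set (c0 := INR (n - 1) * (1/2) ^ (n - 2)).
  assert (Hc0 : 0 < c0) by (apply Rmult_lt_0_compat; [apply lt_0_INR; lia | apply pow_lt; lra]).
  assert (Hint := is_RInt_gen_ex_RInt _ _ (I_correct 1 ltac:(lia))).
  assert (Hlow : c0 * RInt f a b ^ 2 / (b - a) <= RInt (beta_integrand n F f 1) a b).
  { apply RInt_ge_of_ge_sq; [easy | lra | apply (density_ex_RInt F f Hcdf) | apply Hint |].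
    intros t Ht; rewrite beta_integrand_first; unfold c0.
    assert ((1/2) ^ (n - 2) <= F t ^ (n - 2)).
    { apply pow_incr; split; [lra |].
      rewrite <- Ha; apply (cdf_nondecreasing F f Hcdf); lra. }
    assert (0 <= f t ^ 2) by apply pow2_ge_0.
    assert (0 <= INR (n - 1)) by apply pos_INR.
    apply Rmult_le_compat_r; [easy |].
    apply Rmult_le_compat_l; easy. }
  rewrite <- (cdf_increment F f Hcdf), Ha, Hb in Hlow.
  assert (0 < c0 * (3/4 - 1/2) ^ 2 / (b - a))
    by (apply Rdiv_lt_0_compat; [apply Rmult_lt_0_compat |]; lra).
  assert (RInt (beta_integrand n F f 1) a b <= I 1)
    by (apply (is_RInt_gen_ge_RInt _ _ _ _ Hw0 (I_correct 1 ltac:(lia))); lra).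
  lra.
Qed.

End BetaIntegrals.

Lemma binomial_pos a b : 0 < Binomial.C a b.
Proof.
  unfold Binomial.C; apply Rdiv_lt_0_compat; [| apply Rmult_lt_0_compat];
    apply INR_fact_lt_0.
Qed.

Section BetaSigns.
Variables (n : nat) (F f : R -> R).
Hypothesis Hn : (2 <= n)%nat.
Hypothesis Hcdf : cdf_with_density F f.
Hypothesis Hex : forall r, (1 <= r <= n)%nat ->
  ex_RInt_gen (beta_integrand n F f r) at_minf at_pinf.

Lemma beta_first_pos : 0 < beta n F f 1.
Proof.
  rewrite beta_eq; apply Rmult_lt_0_compat;
    [apply binomial_pos | apply beta_integral_first_pos; auto].
Qed.

Hypothesis Hunim : unimodal f.

Lemma beta_last_nonpos : beta n F f n <= 0.
Proof.
  destruct (density_mode F f Hcdf Hunim) as [m0 Hm0].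
  rewrite beta_eq; apply Rmult_le_0_l; [left; apply binomial_pos |].
  apply (beta_integral_last_nonpos n F f Hcdf Hex m0 Hm0 Hn).
Qed.

Lemma beta_single_crossing : single_crossing (beta n F f) n.
Proof.
  intros k s Hk Hks Hs.
  destruct (density_mode F f Hcdf Hunim) as [m0 Hm0].
  rewrite beta_eq in Hs |- *.
  assert (HCs := binomial_pos (n - 1) (s - 1)); assert (HCk := binomial_pos (n - 1) (k - 1)).
  apply Rmult_le_pos; [lra |].
  apply (beta_integral_single_crossing n F f Hcdf Hex m0 Hm0 k s Hk Hks).
  apply (Rmult_lt_reg_l (Binomial.C (n - 1) (s - 1))); lra.
Qed.

End BetaSigns.

Lemma fold_Rmax_ge (l : list R) x0 x : In x l -> x <= fold_right Rmax x0 l.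
Proof.
  induction l as [|y l IH]; simpl; [easy |].
  intros [<- | Hx]; [apply Rmax_l |].
  eapply Rle_trans; [apply IH, Hx | apply Rmax_r].
Qed.

Lemma fold_Rmax_attained (l : list R) x0 :
  fold_right Rmax x0 l = x0 \/ In (fold_right Rmax x0 l) l.
Proof.
  induction l as [|y l IH]; simpl; [now left |].
  destruct (Rle_or_lt y (fold_right Rmax x0 l)) as [Hle | Hlt].
  - rewrite Rmax_right by easy.
    destruct IH as [-> | Hin]; [now left | now right; right].
  - rewrite Rmax_left by lra; now right; left.
Qed.

Lemma affine_le_near_1 (p0 p1 q0 q1 : R) : p1 < q1 ->
  exists t0, 0 <= t0 < 1 /\
    forall t, t0 <= t <= 1 -> (1 - t) * p0 + t * p1 <= (1 - t) * q0 + t * q1.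
Proof.
  intros H1.
  destruct (Rle_or_lt p0 q0) as [H0 | H0].
  - exists 0; split; [lra |]; intros t Ht; nra.
  - exists ((p0 - q0) / (p0 - q0 + (q1 - p1))).
    assert (Hd : 0 < p0 - q0 + (q1 - p1)) by lra.
    split; [split; [apply Rdiv_le_0_compat | apply (Rdiv_lt_1 (p0 - q0))]; lra |].
    intros t [Ht _].
    apply (Rmult_le_compat_r (p0 - q0 + (q1 - p1))) in Ht; [| lra].
    replace ((p0 - q0) / (p0 - q0 + (q1 - p1)) * (p0 - q0 + (q1 - p1))) with (p0 - q0)
      in Ht by (field; lra).
    lra.
Qed.

Lemma near_1_forall_lt (Q : nat -> R -> Prop) (m : nat) :
  (forall r, (r < m)%nat -> exists t0, 0 <= t0 < 1 /\ forall t, t0 <= t <= 1 -> Q r t) ->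
  exists t0, 0 <= t0 < 1 /\ forall r t, (r < m)%nat -> t0 <= t <= 1 -> Q r t.
Proof.
  induction m as [|m IH]; intros H.
  - exists 0; split; [lra | intros; lia].
  - destruct IH as [t1 [Ht1 H1]]; [intros r Hr; apply H; lia |].
    destruct (H m ltac:(lia)) as [t2 [Ht2 H2]].
    assert (t1 <= Rmax t1 t2) by apply Rmax_l; assert (t2 <= Rmax t1 t2) by apply Rmax_r.
    exists (Rmax t1 t2); split; [split; [lra | apply Rmax_lub_lt; lra] |].
    intros r t Hr Ht.
    destruct (Nat.eq_dec r m) as [-> | Hne]; [apply H2 | apply H1]; try lia; lra.
Qed.

Section Prizes.
Variables (n : nat) (F f : R -> R).

Notation beta_ := (beta n F f).
Notation B := (Bsum n F f).
Notation A_ := (A n F f).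
Notation M := (Mstar n F f).

Lemma Bsum_S r : B (S r) = B r + beta_ (S r).
Proof.
  unfold Bsum; rewrite seq_S, map_app, fold_right_app; simpl.
  replace (1 + r)%nat with (S r) by lia.
  induction (map beta_ (seq 1 r)) as [|x l IH]; simpl; [ring | rewrite IH; ring].
Qed.

Lemma Bsum_0 : B 0 = 0.
Proof. reflexivity. Qed.

Lemma Bsum_le_of_nonneg r s : (r <= s)%nat ->
  (forall k, (r < k <= s)%nat -> 0 <= beta_ k) -> B r <= B s.
Proof.
  intros Hrs Hb; induction s as [|s IH]; [replace r with 0%nat by lia; lra |].
  destruct (Nat.eq_dec r (S s)) as [-> | Hne]; [lra |].
  rewrite Bsum_S; assert (B r <= B s) by (apply IH; [lia | intros; apply Hb; lia]).
  assert (0 <= beta_ (S s)) by (apply Hb; lia); lra.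
Qed.

Lemma Bsum_le_of_nonpos r s : (r <= s)%nat ->
  (forall k, (r < k <= s)%nat -> beta_ k <= 0) -> B s <= B r.
Proof.
  intros Hrs Hb; induction s as [|s IH]; [replace r with 0%nat by lia; lra |].
  destruct (Nat.eq_dec r (S s)) as [-> | Hne]; [lra |].
  rewrite Bsum_S; assert (B s <= B r) by (apply IH; [lia | intros; apply Hb; lia]).
  assert (beta_ (S s) <= 0) by (apply Hb; lia); lra.
Qed.

Section LastPositive.
Hypothesis Hsign : single_crossing beta_ n.
Variable rhat : nat.
Hypothesis Hrhat : (1 <= rhat <= n)%nat.
Hypothesis Hpos : 0 < beta_ rhat.

Lemma Bsum_lt_last_pos r : (r < rhat)%nat -> B r < B rhat.
Proof.
  intros Hr; destruct rhat as [|s]; [lia |].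
  rewrite Bsum_S.
  assert (B r <= B s).
  { apply Bsum_le_of_nonneg; [lia |].
    intros k Hk; apply (Hsign k (S s)); auto; lia. }
  lra.
Qed.

Lemma Bsum_last_pos_pos : 0 < B rhat.
Proof. apply (Bsum_lt_last_pos 0); lia. Qed.

Lemma Bsum_nonneg_upto_last_pos r : (r <= rhat)%nat -> 0 <= B r.
Proof.
  intros Hr; destruct (Nat.eq_dec r rhat) as [-> | Hne]; [left; apply Bsum_last_pos_pos |].
  apply (Bsum_le_of_nonneg 0 r); [lia |].
  intros k Hk; apply (Hsign k rhat); auto; lia.
Qed.

End LastPositive.

Hypothesis Hn : (2 <= n)%nat.

Let INR_n_pos : 0 < INR n.
Proof. apply lt_0_INR; lia. Qed.

Lemma A_eq r th : (1 <= r)%nat ->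
  A_ r th = (1 - th) * (B r / INR r) + th * (2 * B r / INR n).
Proof. intros Hr; assert (0 < INR r) by (apply lt_0_INR; lia); unfold A; field; lra. Qed.

Lemma A_sub r a b : (1 <= r)%nat ->
  A_ r b - A_ r a = (b - a) * (B r / INR r) * (2 * INR r / INR n - 1).
Proof. intros Hr; assert (0 < INR r) by (apply lt_0_INR; lia); unfold A; field; lra. Qed.

Lemma A_increasing r a b : (1 <= r)%nat -> 0 < B r -> (n < 2 * r)%nat -> a < b ->
  A_ r a < A_ r b.
Proof.
  intros Hr HB H2r Hab; assert (H := A_sub r a b Hr).
  assert (0 < INR r) by (apply lt_0_INR; lia).
  assert (INR n < 2 * INR r).
  { replace (2 * INR r) with (INR (2 * r)) by (rewrite mult_INR; simpl; ring).
    apply lt_INR; lia. }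
  assert (1 < 2 * INR r / INR n)
    by (apply (Rmult_lt_reg_r (INR n)); [easy | unfold Rdiv; rewrite Rmult_assoc, Rinv_l; lra]).
  assert (0 < B r / INR r) by (apply Rdiv_lt_0_compat; lra).
  assert (0 < (b - a) * (B r / INR r)) by (apply Rmult_lt_0_compat; lra).
  nra.
Qed.

Lemma A_nonincreasing r a b : (1 <= r)%nat -> 0 <= B r -> (2 * r <= n)%nat -> a <= b ->
  A_ r b <= A_ r a.
Proof.
  intros Hr HB H2r Hab; assert (H := A_sub r a b Hr).
  assert (0 < INR r) by (apply lt_0_INR; lia).
  assert (2 * INR r <= INR n).
  { replace (2 * INR r) with (INR (2 * r)) by (rewrite mult_INR; simpl; ring).
    apply le_INR; lia. }
  assert (2 * INR r / INR n <= 1)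
    by (apply (Rmult_le_reg_r (INR n)); [easy | unfold Rdiv; rewrite Rmult_assoc, Rinv_l; lra]).
  assert (0 <= B r / INR r) by (apply Rdiv_le_0_compat; lra).
  assert (0 <= (b - a) * (B r / INR r)) by (apply Rmult_le_pos; lra).
  nra.
Qed.

Lemma A_le_of_ratio_le r r' th : (1 <= r <= r')%nat -> 0 <= th <= 1 ->
  B r / INR r <= B r' / INR r' -> 0 < B r' -> A_ r th <= A_ r' th.
Proof.
  intros Hr Hth Hratio HB.
  assert (0 < INR r) by (apply lt_0_INR; lia); assert (INR r <= INR r') by (apply le_INR; lia).
  assert (HBB : B r <= B r').
  { destruct (Rle_or_lt (B r) 0); [lra |].
    replace (B r) with (INR r * (B r / INR r)) by (field; lra).
    replace (B r') with (INR r' * (B r' / INR r')) by (field; lra).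
    assert (0 <= B r / INR r) by (apply Rdiv_le_0_compat; lra).
    apply Rle_trans with (INR r * (B r' / INR r')); apply Rmult_le_compat; lra. }
  rewrite !A_eq by lia.
  assert (2 * B r / INR n <= 2 * B r' / INR n)
    by (apply Rmult_le_compat_r; [left; apply Rinv_0_lt_compat |]; lra).
  apply Rplus_le_compat; apply Rmult_le_compat_l; lra.
Qed.

Lemma A_le_of_Bsum_le r r' th : (1 <= r' <= r)%nat -> 0 <= th <= 1 ->
  B r <= B r' -> 0 < B r' -> A_ r th <= A_ r' th.
Proof.
  intros Hr Hth HBB HB.
  assert (0 < INR r') by (apply lt_0_INR; lia); assert (INR r' <= INR r) by (apply le_INR; lia).
  assert (Hinv : / INR r <= / INR r') by (apply Rinv_le_contravar; lra).
  assert (0 < / INR r) by (apply Rinv_0_lt_compat; lra).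
  assert (Hratio : B r / INR r <= B r' / INR r').
  { unfold Rdiv; destruct (Rle_or_lt (B r) 0); [nra |].
    apply Rmult_le_compat; lra. }
  rewrite !A_eq by lia.
  assert (2 * B r / INR n <= 2 * B r' / INR n)
    by (apply Rmult_le_compat_r; [left; apply Rinv_0_lt_compat |]; lra).
  apply Rplus_le_compat; apply Rmult_le_compat_l; lra.
Qed.

Lemma A_nonpos r th : (1 <= r)%nat -> 0 <= th <= 1 -> B r <= 0 -> A_ r th <= 0.
Proof.
  intros Hr Hth HB; rewrite A_eq by easy.
  assert (0 < / INR r) by (apply Rinv_0_lt_compat, lt_0_INR; lia).
  assert (0 < / INR n) by (apply Rinv_0_lt_compat; lra).
  assert (B r * / INR r <= 0) by nra; assert (2 * B r * / INR n <= 0) by nra.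
  unfold Rdiv; nra.
Qed.

Lemma A_pos r th : (1 <= r)%nat -> 0 <= th <= 1 -> 0 < B r -> 0 < A_ r th.
Proof.
  intros Hr Hth HB; rewrite A_eq by easy.
  assert (0 < / INR r) by (apply Rinv_0_lt_compat, lt_0_INR; lia).
  assert (0 < / INR n) by (apply Rinv_0_lt_compat; lra).
  assert (0 < B r * / INR r) by nra; assert (0 < 2 * B r * / INR n) by nra.
  unfold Rdiv; destruct (Rlt_or_le th 1); nra.
Qed.

Lemma A_le_Mstar r th : (1 <= r <= n - 1)%nat -> A_ r th <= M th.
Proof.
  intros Hr; apply fold_Rmax_ge, in_map_iff; exists r; split; [easy |].
  apply in_seq; lia.
Qed.

Lemma Mstar_attained th : exists r, (1 <= r <= n - 1)%nat /\ M th = A_ r th.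
Proof.
  unfold Mstar.
  destruct (fold_Rmax_attained (map (fun r => A_ r th) (seq 1 (n - 1))) (A_ 1 th))
    as [-> | Hin]; [exists 1%nat; split; [lia | easy] |].
  apply in_map_iff in Hin; destruct Hin as [r [Hr Hin]]; apply in_seq in Hin.
  exists r; split; [lia | easy].
Qed.

Lemma Mstar_nonincreasing_of :
  (forall r a b, (1 <= r <= n - 1)%nat -> 0 <= a -> a <= b -> b <= 1 -> A_ r b <= M a) ->
  nonincreasing_on01 M.
Proof.
  intros H a b Ha Hab Hb; destruct (Mstar_attained b) as [r [Hr ->]]; auto.
Qed.

Lemma Mstar_increasing_of lo hi :
  (forall r a b, (1 <= r <= n - 1)%nat -> lo <= a -> a < b -> b <= hi -> A_ r a < M b) ->
  increasing_on M lo hi.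
Proof.
  intros H a b Ha Hab Hb; destruct (Mstar_attained a) as [r [Hr ->]]; auto.
Qed.

Lemma A_upper_lt_Mstar r s a b : (1 <= r <= n - 1)%nat -> (n < 2 * r)%nat ->
  (1 <= s <= n - 1)%nat -> 0 < B s -> 0 <= a -> a < b -> b <= 1 -> A_ r a < M b.
Proof.
  intros Hr H2r Hs HBs Ha Hab Hb.
  destruct (Rle_or_lt (B r) 0) as [HBr | HBr].
  - apply Rle_lt_trans with 0; [apply A_nonpos; [lia | lra | easy] |].
    apply Rlt_le_trans with (A_ s b); [apply A_pos; [lia | lra | easy] | apply A_le_Mstar, Hs].
  - apply Rlt_le_trans with (A_ r b); [apply A_increasing; auto; lia | apply A_le_Mstar, Hr].
Qed.

Lemma A_affine r th : (1 <= r)%nat -> A_ r th = (1 - th) * A_ r 0 + th * A_ r 1.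
Proof. intros Hr; rewrite !A_eq by easy; ring. Qed.

Theorem Mstar_increasing_of_high_argmax r0 : (1 <= r0 <= n - 1)%nat ->
  (forall r, (1 <= r <= n - 1)%nat -> B r / INR r <= B r0 / INR r0) ->
  (n < 2 * r0)%nat -> 0 < beta_ 1 -> increasing_on M 0 1.
Proof.
  intros Hr0 Hmax H2r0 Hb1.
  assert (HB0 : 0 < B r0).
  { assert (H := Hmax 1%nat ltac:(lia)).
    replace (B 1 / INR 1) with (beta_ 1) in H by (rewrite Bsum_S, Bsum_0; simpl; field).
    assert (0 < INR r0) by (apply lt_0_INR; lia).
    replace (B r0) with (B r0 / INR r0 * INR r0) by (field; lra); nra. }
  apply Mstar_increasing_of; intros r a b Hr Ha Hab Hb.
  destruct (Nat.le_gt_cases r r0).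
  - apply Rle_lt_trans with (A_ r0 a);
      [apply A_le_of_ratio_le; [lia | lra | apply Hmax; lia | easy] |].
    apply Rlt_le_trans with (A_ r0 b); [apply A_increasing; auto; lia | apply A_le_Mstar, Hr0].
  - apply (A_upper_lt_Mstar r r0); auto; lia.
Qed.

Theorem Mstar_nonincreasing_of_low_last_pos rhat :
  single_crossing beta_ n ->
  (1 <= rhat <= n)%nat -> 0 < beta_ rhat -> (forall r, (rhat < r <= n)%nat -> beta_ r <= 0) ->
  (2 * rhat <= n)%nat -> nonincreasing_on01 M.
Proof.
  intros Hsign Hrhat Hpos Hafter H2.
  assert (HBpos := Bsum_last_pos_pos Hsign rhat Hrhat Hpos).
  apply Mstar_nonincreasing_of; intros r a b Hr Ha Hab Hb.
  destruct (Nat.le_gt_cases r rhat).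
  - apply Rle_trans with (A_ r a); [| apply A_le_Mstar, Hr].
    apply A_nonincreasing; [lia | | lia | easy].
    apply (Bsum_nonneg_upto_last_pos Hsign rhat); auto; lia.
  - apply Rle_trans with (A_ rhat b).
    { apply A_le_of_Bsum_le; [lia | lra | | easy].
      apply Bsum_le_of_nonpos; [lia | intros; apply Hafter; lia]. }
    apply Rle_trans with (A_ rhat a); [| apply A_le_Mstar; lia].
    apply A_nonincreasing; [lia | now left | lia | easy].
Qed.

Theorem Mstar_eventually_increasing_of_high_last_pos rhat :
  single_crossing beta_ n ->
  (1 <= rhat <= n)%nat -> 0 < beta_ rhat -> (forall r, (rhat < r <= n)%nat -> beta_ r <= 0) ->
  (n < 2 * rhat)%nat -> beta_ n <= 0 ->
  exists th0, 0 <= th0 < 1 /\ increasing_on M th0 1.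
Proof.
  intros Hsign Hrhat Hpos Hafter H2 Hlast.
  assert (HBpos := Bsum_last_pos_pos Hsign rhat Hrhat Hpos).
  assert (Hrn : (rhat <= n - 1)%nat) by (destruct (Nat.eq_dec rhat n); [subst; lra | lia]).
  destruct (near_1_forall_lt (fun r t => (1 <= r)%nat -> A_ r t <= A_ rhat t) rhat)
    as [th0 [Hth0 Hnear]].
  { intros [|r] Hr; [exists 0; split; [lra | intros; lia] |].
    assert (H1 : A_ (S r) 1 < A_ rhat 1).
    { rewrite !A_eq by lia.
      assert (B (S r) < B rhat) by (apply (Bsum_lt_last_pos Hsign rhat); auto; lia).
      assert (0 < / INR n) by (apply Rinv_0_lt_compat; lra).
      unfold Rdiv; nra. }
    destruct (affine_le_near_1 (A_ (S r) 0) (A_ (S r) 1) (A_ rhat 0) (A_ rhat 1) H1)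
      as [t0 [Ht0 Haff]].
    exists t0; split; [easy |]; intros t Ht _.
    rewrite (A_affine (S r)), (A_affine rhat) by lia; auto. }
  exists th0; split; [easy |].
  apply Mstar_increasing_of; intros r a b Hr Ha Hab Hb.
  destruct (Nat.le_gt_cases rhat r).
  - apply (A_upper_lt_Mstar r rhat); try lia; [exact HBpos | lra | easy | easy].
  - apply Rle_lt_trans with (A_ rhat a); [apply Hnear; [easy | lra | lia] |].
    apply Rlt_le_trans with (A_ rhat b); [| apply A_le_Mstar; lia].
    apply A_increasing; [lia | exact HBpos | lia | easy].
Qed.

End Prizes.

Lemma filterlim_within_le (g : R -> R) (D : R -> Prop) x l c :
  filterlim g (within D (locally x)) (locally l) ->
  (forall d : posreal, exists y, D y /\ Rabs (y - x) < d /\ g y <= c) -> l <= c.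
Proof.
  intros Hg Hy.
  destruct (Rle_or_lt l c) as [|Hlc]; [easy | exfalso].
  destruct (Hg _ (locally_ball l (mkposreal (l - c) ltac:(lra)))) as [d Hd].
  destruct (Hy d) as [y [HDy [Hyx Hgy]]].
  assert (H : Rabs (g y - l) < l - c) by exact (Hd y Hyx HDy).
  apply Rabs_def2 in H; lra.
Qed.

Lemma filterlim_within_ge (g : R -> R) (D : R -> Prop) x l c :
  filterlim g (within D (locally x)) (locally l) ->
  (forall d : posreal, exists y, D y /\ Rabs (y - x) < d /\ c <= g y) -> c <= l.
Proof.
  intros Hg Hy.
  destruct (Rle_or_lt c l) as [|Hlc]; [easy | exfalso].
  destruct (Hg _ (locally_ball l (mkposreal (c - l) ltac:(lra)))) as [d Hd].
  destruct (Hy d) as [y [HDy [Hyx Hgy]]].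
  assert (H : Rabs (g y - l) < c - l) by exact (Hd y Hyx HDy).
  apply Rabs_def2 in H; lra.
Qed.

Definition slope (c : R -> R) (x y : R) : R := (c y - c x) / (y - x).

Section Cost.
Variables (c dc : R -> R) (xbar : R).
Hypothesis Hc : effort_cost c dc xbar.

Lemma slope_lt_slope x z y : 0 <= x -> x < z -> z < y -> y <= xbar ->
  slope c x z < slope c x y /\ slope c x y < slope c z y.
Proof.
  intros Hx Hxz Hzy Hy.
  destruct Hc as [_ [_ [_ [_ [_ [_ Hconv]]]]]].
  set (t := (y - z) / (y - x)).
  assert (Ht : 0 < t < 1).
  { unfold t; split; [apply Rdiv_lt_0_compat; lra |].
    apply (Rdiv_lt_1 (y - z) (y - x)); lra. }
  assert (Hz : t * x + (1 - t) * y = z) by (unfold t; field; lra).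
  specialize (Hconv x y t ltac:(lra) ltac:(lra) ltac:(lra) Ht); rewrite Hz in Hconv.
  unfold slope; split.
  - replace ((c y - c x) / (y - x)) with ((1 - t) * (c y - c x) / (z - x))
      by (unfold t; field; lra).
    apply Rmult_lt_compat_r; [apply Rinv_0_lt_compat |]; lra.
  - replace ((c y - c x) / (y - x)) with (t * (c y - c x) / (y - z))
      by (unfold t; field; lra).
    apply Rmult_lt_compat_r; [apply Rinv_0_lt_compat |]; lra.
Qed.

Lemma derivative_le_slope x w : 0 <= x -> x < w -> w <= xbar -> dc x <= slope c x w.
Proof.
  intros Hx Hxw Hw.
  destruct Hc as [_ [_ [_ [_ [_ [Hd _]]]]]].
  apply (filterlim_within_le _ _ x _ _ (Hd x ltac:(lra))).
  intros d.
  set (e := Rmin (d / 2) ((w - x) / 2)).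
  assert (He : 0 < e) by (apply Rmin_glb_lt; generalize (cond_pos d); lra).
  assert (e <= d / 2) by apply Rmin_l; assert (e <= (w - x) / 2) by apply Rmin_r.
  exists (x + e); split; [lra | split].
  - rewrite Rabs_pos_eq; generalize (cond_pos d); lra.
  - left; apply (slope_lt_slope x (x + e) w); lra.
Qed.

Lemma slope_le_derivative w y : 0 <= w -> w < y -> y <= xbar -> slope c w y <= dc y.
Proof.
  intros Hw Hwy Hy.
  destruct Hc as [_ [_ [_ [_ [_ [Hd _]]]]]].
  apply (filterlim_within_ge _ _ y _ _ (Hd y ltac:(lra))).
  intros d.
  set (e := Rmin (d / 2) ((y - w) / 2)).
  assert (He : 0 < e) by (apply Rmin_glb_lt; generalize (cond_pos d); lra).
  assert (e <= d / 2) by apply Rmin_l; assert (e <= (y - w) / 2) by apply Rmin_r.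
  exists (y - e); split; [lra | split].
  - rewrite Rabs_left by lra; generalize (cond_pos d); lra.
  - replace ((c (y - e) - c y) / (y - e - y)) with (slope c (y - e) y)
      by (unfold slope; field; lra).
    left; apply (slope_lt_slope w (y - e) y); lra.
Qed.

Lemma derivative_increasing x y : 0 <= x -> x < y -> y <= xbar -> dc x < dc y.
Proof.
  intros Hx Hxy Hy.
  assert (dc x <= slope c x ((x + y) / 2)) by (apply derivative_le_slope; lra).
  assert (slope c ((x + y) / 2) y <= dc y) by (apply slope_le_derivative; lra).
  destruct (slope_lt_slope x ((x + y) / 2) y); lra.
Qed.

End Cost.

Lemma equilibrium_effort_nonincreasing n F f c dc xbar xss :
  effort_cost c dc xbar -> equilibrium_effort n F f dc xbar xss ->
  nonincreasing_on01 (Mstar n F f) -> nonincreasing_on01 xss.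
Proof.
  intros Hc He HM a b Ha Hab Hb.
  destruct (He a ltac:(lra)) as [Ha1 Ha2]; destruct (He b ltac:(lra)) as [Hb1 Hb2].
  destruct (Rle_or_lt (xss b) (xss a)) as [|Hlt]; [easy | exfalso].
  assert (dc (xss a) < dc (xss b)) by (apply (derivative_increasing c dc xbar Hc); lra).
  specialize (HM a b Ha Hab Hb); lra.
Qed.

Lemma equilibrium_effort_increasing n F f c dc xbar xss lo hi :
  effort_cost c dc xbar -> equilibrium_effort n F f dc xbar xss -> 0 <= lo -> hi <= 1 ->
  increasing_on (Mstar n F f) lo hi -> increasing_on xss lo hi.
Proof.
  intros Hc He Hlo Hhi HM a b Ha Hab Hb.
  destruct (He a ltac:(lra)) as [Ha1 Ha2]; destruct (He b ltac:(lra)) as [Hb1 Hb2].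
  specialize (HM a b Ha Hab Hb).
  destruct (Rlt_or_le (xss a) (xss b)) as [|[Hlt | Heq]]; [easy | exfalso | exfalso].
  - assert (dc (xss b) < dc (xss a)) by (apply (derivative_increasing c dc xbar Hc); lra).
    lra.
  - rewrite Heq in Hb2; lra.
Qed.

Lemma double_le_of_le_half n r : (r <= n / 2)%nat -> (2 * r <= n)%nat.
Proof. intros H; generalize (Nat.Div0.mul_div_le n 2); lia. Qed.

Lemma lt_double_of_half_lt n r : ((n + 1) / 2 < r)%nat -> (n < 2 * r)%nat.
Proof.
  intros H.
  generalize (Nat.div_mod (n + 1) 2 ltac:(lia)) (Nat.mod_upper_bound (n + 1) 2 ltac:(lia)).
  lia.
Qed.

Theorem corollary2 (n : nat) (F f c dc : R -> R) (xbar : R) :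
  (2 <= n)%nat ->
  cdf_with_density F f ->
  (forall r, (1 <= r <= n)%nat ->
     ex_RInt_gen (beta_integrand n F f r) (Rbar_locally m_infty) (Rbar_locally p_infty)) ->
  effort_cost c dc xbar ->
  unimodal f ->
  unimodal_failure_rate F f ->
  (* (i) *)
  (forall rhat, (1 <= rhat <= n)%nat -> 0 < beta n F f rhat ->
     (forall r, (rhat < r <= n)%nat -> beta n F f r <= 0) ->
     (rhat <= n / 2)%nat ->
     nonincreasing_on01 (Mstar n F f) /\
     (forall xss, equilibrium_effort n F f dc xbar xss -> nonincreasing_on01 xss)) /\
  (* (ii) *)
  (forall r0, (1 <= r0 <= n - 1)%nat ->
     (forall r, (1 <= r <= n - 1)%nat -> Bsum n F f r / INR r <= Bsum n F f r0 / INR r0) ->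
     ((n + 1) / 2 < r0)%nat ->
     increasing_on (Mstar n F f) 0 1 /\
     (forall xss, equilibrium_effort n F f dc xbar xss -> increasing_on xss 0 1)) /\
  (* (iii) *)
  (forall rhat, (1 <= rhat <= n)%nat -> 0 < beta n F f rhat ->
     (forall r, (rhat < r <= n)%nat -> beta n F f r <= 0) ->
     ((n + 1) / 2 < rhat)%nat ->
     exists thetabar, 0 <= thetabar < 1 /\
       increasing_on (Mstar n F f) thetabar 1 /\
       (forall xss, equilibrium_effort n F f dc xbar xss -> increasing_on xss thetabar 1)).
Proof.
  intros Hn Hcdf Hex Hcost Hunim _.
  assert (Hsign := beta_single_crossing n F f Hcdf Hex Hunim).
  split; [| split].
  - intros rhat Hr Hpos Hafter Hhalf.
    assert (HM := Mstar_nonincreasing_of_low_last_pos n F f Hn rhat Hsign Hr Hpos Hafter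
                    (double_le_of_le_half n rhat Hhalf)).
    split; [exact HM |].
    intros xss Hx; exact (equilibrium_effort_nonincreasing n F f c dc xbar xss Hcost Hx HM).
  - intros r0 Hr0 Hmax Hhalf.
    assert (HM := Mstar_increasing_of_high_argmax n F f Hn r0 Hr0 Hmax
                    (lt_double_of_half_lt n r0 Hhalf) (beta_first_pos n F f Hn Hcdf Hex)).
    split; [exact HM |].
    intros xss Hx; apply (equilibrium_effort_increasing n F f c dc xbar xss 0 1); auto; lra.
  - intros rhat Hr Hpos Hafter Hhalf.
    destruct (Mstar_eventually_increasing_of_high_last_pos n F f Hn rhat Hsign Hr Hpos Hafter
                (lt_double_of_half_lt n rhat Hhalf) (beta_last_nonpos n F f Hn Hcdf Hex Hunim))
      as [th0 [Hth0 HM]].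
    exists th0; split; [easy | split; [exact HM |]].
    intros xss Hx; apply (equilibrium_effort_increasing n F f c dc xbar xss th0 1); auto; lra.
Qed.
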